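(* Let $\varphi$ be a normal form $\mathrm{GF}^2{+}\mathrm{EG}$ sentence whose equivalence symbols are $E_1,\dots,E_k$, let $\bar\Theta=(\Theta^{E_1},\dots,\Theta^{E_k})$ be a tuple of sets of $M_\varphi$-counting types, let $\theta\in\Theta^{E_i}$ for some $i$, and let $\Gamma_{\bar\Theta}(\theta)$ be the system of linear (in)equalities defined in the context. The following are equivalent: (i) $\Gamma_{\bar\Theta}(\theta)$ has a non-negative integer solution; (ii) $\Gamma_{\bar\Theta}(\theta)$ has a non-negative rational solution; (iii) $\Gamma_{\bar\Theta}(\theta)$ has a non-negative integer solution in which at most $m$ unknowns are non-zero and all values are bounded by $m(m\cdot M_\varphi)^{2m+1}$, where $m$ is the number of (in)equalities in $\Gamma_{\bar\Theta}(\theta)$.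
   Context: $\mathrm{GF}^2{+}\mathrm{EG}$ is the two-variable guarded fragment in which the distinguished binary symbols $E_1,\dots,E_k$ occur only in guards and are interpreted as equivalences; $\varphi$ is in normal form (a conjunction of conjuncts of quantifier depth at most two of the usual Scott-type shapes). $\mathcal{A}_\varphi$ is the set of atomic 1-types over the signature of $\varphi$ (maximal consistent sets of atoms and negated atoms in the variable $x$), $|\varphi|$ is the length of $\varphi$, and $M_\varphi=3|\mathcal{A}_\varphi||\varphi|^3$. An $M_\varphi$-counting type is a function $\theta:\mathcal{A}_\varphi\to\{0,1,\dots,M_\varphi\}$; a 1-type $\alpha$ appears in it if $\theta(\alpha)>0$. $\alpha$ appears in $\Theta^{E_i}$ if it appears in some element of $\Theta^{E_i}$; $\mathcal{A}_{\bar\Theta}$ is the set of 1-types appearing in some $\Theta^{E_i}$. $\alpha$ is royal for $E_i$-classes if $\alpha$ appears in $\Theta^{E_i}$ and $\theta'(\alpha)<M_\varphi$ for every $\theta'\in\Theta^{E_i}$. The system $\Gamma_{\bar\Theta}(\theta)$ has unknowns $X^{E_j}_{\theta'}$ for $1\le j\le k$, $\theta'\in\Theta^{E_j}$, and $Y^{E_j}_\alpha$ for $1\le j\le k$, $\alpha\in\mathcal{A}_{\bar\Theta}$. For every $\alpha\in\mathcal{A}_{\bar\Theta}$ and every $j$ it contains: (E0) $Y^{E_j}_\alpha=\sum_{\theta'\in\Theta^{E_j}}\theta'(\alpha)X^{E_j}_{\theta'}$; (E1a) if $\alpha$ is royal for $E_j$-classes, $Y^{E_j}_\alpha\ge1$;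 (E1b) if $\alpha$ is not royal for $E_j$-classes, $\sum_{\theta'\in\Theta^{E_j},\,\theta'(\alpha)=M_\varphi}X^{E_j}_{\theta'}\ge1$; (E2) if $\alpha$ is royal for $E_j$-classes, $Y^{E_j}_\alpha\ge Y^{E_l}_\alpha$ for every $l\ne j$. Additionally it contains (E3) $X^{E_i}_\theta\ge1$ for the distinguished $\theta\in\Theta^{E_i}$. *)

From Stdlib Require List.
From HB Require Import structures.
From mathcomp Require Import all_boot all_order all_algebra.
Set Implicit Arguments. Unset Strict Implicit. Unset Printing Implicit Defensive.
Import Order.TTheory GRing.Theory Num.Theory.

(* Abstraction of the data of a normal-form GF^2+EG sentence phi that the
   system Gamma depends on:
     A    : the finite type of atomic 1-types  (A_phi),
     len  : the length |phi| of phi,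
     k    : the number of equivalence symbols E_1..E_k (indexed by 'I_k). *)

Section Gamma.
Variables (A : finType) (len k : nat).

Definition Mphi : nat := 3 * #|A| * len ^ 3.

Definition ctype : finType := {ffun A -> 'I_(Mphi.+1)}.

Variable Theta : 'I_k -> {set ctype}.

Definition appears_in (a : A) (t : ctype) : bool := 0 < t a.
Definition appears (j : 'I_k) (a : A) : bool := [exists t in Theta j, appears_in a t].
Definition ATheta : {set A} := [set a | [exists j, appears j a]].
Definition royal (j : 'I_k) (a : A) : bool :=
  appears j a && [forall t in Theta j, (t a < Mphi)%N].

Inductive constr :=
| CE0 of 'I_k & A          (* Y^{E_j}_a = sum_t t(a) X^{E_j}_t *)
| CE1a of 'I_k & A         (* Y^{E_j}_a >= 1 *)
| CE1b of 'I_k & A         (* sum_{t, t(a)=M} X^{E_j}_t >= 1 *)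
| CE2 of 'I_k & 'I_k & A   (* CE2 j l a : Y^{E_j}_a >= Y^{E_l}_a *)
| CE3.                     (* X^{E_i}_theta >= 1 *)

Definition Gamma : seq constr :=
  flatten [seq flatten [seq
      [:: CE0 j a; if royal j a then CE1a j a else CE1b j a] ++
      (if royal j a then [seq CE2 j l a | l <- enum 'I_k & l != j] else [::])
    | j <- enum 'I_k] | a <- enum ATheta] ++ [:: CE3].

(* Semantics of a constraint under a valuation of the unknowns
   X^{E_j}_t := X j t  and  Y^{E_j}_a := Y j a, in a number domain R. *)
Definition holds (R : numDomainType) (i : 'I_k) (theta : ctype)
    (X : 'I_k -> ctype -> R) (Y : 'I_k -> A -> R) (c : constr) : Prop :=
  match c with
  | CE0 j a => Y j a = \sum_(t in Theta j) (nat_of_ord (t a))%:R * X j t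
  | CE1a j a => 1 <= Y j a
  | CE1b j a => 1 <= \sum_(t in Theta j | nat_of_ord (t a) == Mphi) X j t
  | CE2 j l a => Y l a <= Y j a
  | CE3 => 1 <= X i theta
  end%R.

Definition solves (R : numDomainType) (i : 'I_k) (theta : ctype)
    (X : 'I_k -> ctype -> R) (Y : 'I_k -> A -> R) : Prop :=
  forall c, List.In c Gamma -> holds i theta X Y c.

Definition nonzero_unknowns (X : 'I_k -> ctype -> nat) (Y : 'I_k -> A -> nat) : nat :=
  #|[set p : 'I_k * ctype | (p.2 \in Theta p.1) && (X p.1 p.2 != 0%N)]| +
  #|[set p : 'I_k * A | (p.2 \in ATheta) && (Y p.1 p.2 != 0%N)]|.

End Gamma.

From mathcomp Require Import all_boot all_order all_algebra all_fingroup.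
From Stdlib Require Import Classical_Prop.
Set Implicit Arguments. Unset Strict Implicit. Unset Printing Implicit Defensive.
Import Order.TTheory GRing.Theory Num.Theory.
Local Open Scope ring_scope.

(* Gamma is a system of constraints  c.z = 0  and  c.z >= b  in the unknowns
   z = (X, Y), with integer coefficients of absolute value at most M_phi and
   right-hand sides b in {0, 1}.  Starting from a non-negative rational solution,
   the ratio test of the simplex method reaches a vertex of the solution
   polyhedron, i.e. a solution admitting no non-zero direction that is supported
   on its non-zero unknowns and keeps its tight constraints tight.  The non-zero
   values of a vertex are the unique solution of a nonsingular square integer
   subsystem of size s <= m, so by Cramer's rule multiplying them by |det| gives
   integers bounded by s! M_phi^(s-1).  Since the equations are homogeneous and
   the inequalities have non-negative right-hand sides, this multiple is again a
   solution, and it has at most m non-zero unknowns. *)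

Local Notation ratz := (intr : int -> rat).

Lemma norm_det_le (R : numDomainType) n (A : 'M[R]_n) (M : R) :
  (forall i j, `|A i j| <= M) -> `|\det A| <= n`!%:R * M ^+ n.
Proof.
move=> leAM; apply: le_trans (ler_norm_sum _ _ _) _.
rewrite mulr_natl -card_Sn -sumr_const; apply: ler_sum => s _.
rewrite normrM normrX normrN normr1 expr1n mul1r normr_prod.
rewrite -[X in _ ^+ X]card_ord -prodr_const.
by apply: ler_prod => i _; rewrite normr_ge0 leAM.
Qed.

Lemma cramer_int_bound n (B : 'M[int]_n) (c : 'cV[int]_n) (x : 'cV[rat]_n) (M : int) :
  \det B != 0 -> map_mx ratz B *m x = map_mx ratz c ->
  (forall i j, `|B i j| <= M) -> (forall i, `|c i 0| <= 1) ->
  forall j, exists w : int, ratz w = ratz `|\det B| * x j 0 /\ `|w| <= n`!%:R * M ^+ n.-1.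
Proof.
move=> detB_neq0 Bx leBM lec1 j.
have adjE : (\det (map_mx ratz B))%:M *m x = map_mx ratz (\adj B *m c).
  by rewrite -mul_adj_mx -mulmxA Bx map_mxM map_mx_adj.
exists (Num.sg (\det B) * (\adj B *m c) j 0); split.
  have := congr1 (fun u : 'cV[rat]_n => u j 0) adjE.
  rewrite mul_scalar_mx 2!mxE det_map_mx /= => yE.
  by rewrite intrM -yE normrEsg intrM mulrA.
have n_gt0 : (0 < n)%N by apply: leq_ltn_trans (ltn_ord j).
have -> : n`!%:R * M ^+ n.-1 = \sum_(l < n) (n.-1)`!%:R * M ^+ n.-1.
  rewrite sumr_const card_ord -mulrnAl -mulrnA mulnC.
  by case: (n) n_gt0 => // n' _; rewrite factS.
rewrite normrM normr_sg detB_neq0 mul1r mxE.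
apply: le_trans (ler_norm_sum _ _ _) _; apply: ler_sum => l _.
rewrite normrM -[X in _ <= X]mulr1; apply: ler_pM => //.
rewrite mxE /cofactor normrM normrX normrN normr1 expr1n mul1r.
by apply: norm_det_le => i i'; rewrite !mxE.
Qed.

Section Polyhedron.
Variables (V : finType) (m : nat) (C : 'I_m -> V -> int) (b : 'I_m -> int).
Variable (is_eq : 'I_m -> bool).

Definition lhs (z : V -> rat) r := \sum_v ratz (C r v) * z v.
Definition tight z r := lhs z r == ratz (b r).
Definition feasible z := (forall v, 0 <= z v) /\
  forall r, if is_eq r then tight z r else ratz (b r) <= lhs z r.

Definition support (z : V -> rat) := [set v | z v != 0].
Definition slack z := [set r | ~~ tight z r].
Definition weight z := (#|support z| + #|slack z|)%N.

Definition vertex z := forall d : V -> rat,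
  (forall v, z v = 0 -> d v = 0) -> (forall r, tight z r -> lhs d r = 0) ->
  forall v, d v = 0.

Definition shift (z d : V -> rat) l v := z v + l * d v.

Lemma lhs_shift z d l r : lhs (shift z d l) r = lhs z r + l * lhs d r.
Proof.
rewrite /lhs mulr_sumr -big_split; apply: eq_bigr => v _.
by rewrite mulrDr mulrCA.
Qed.

Lemma eq_feasible z1 z2 : z1 =1 z2 -> feasible z1 -> feasible z2.
Proof.
move=> z12 [z1_ge0 z1_rows]; have lhsE r : lhs z1 r = lhs z2 r.
  by apply: eq_bigr => v _; rewrite z12.
by split=> [v|r]; rewrite -?z12 // /tight -lhsE; apply: z1_rows.
Qed.

Section Descent.
Variables (z d : V -> rat).
Hypotheses (z_feas : feasible z) (d_supp : forall v, z v = 0 -> d v = 0).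
Hypothesis d_tight : forall r, tight z r -> lhs d r = 0.

Lemma tight_shift l r : tight z r -> tight (shift z d l) r.
Proof. by move=> zr; rewrite /tight lhs_shift d_tight // mulr0 addr0. Qed.

Lemma support_shift l : support (shift z d l) \subset support z.
Proof.
apply/subsetP => v; rewrite !inE; apply: contraNN => /eqP zv0.
by rewrite /shift zv0 d_supp // mulr0 addr0.
Qed.

Lemma slack_shift l : slack (shift z d l) \subset slack z.
Proof. by apply/subsetP => r; rewrite !inE; apply: contraNN; apply: tight_shift. Qed.

Lemma feasible_shift l : 0 <= l ->
  (forall v, d v < 0 -> l * - d v <= z v) ->
  (forall r, ~~ tight z r -> lhs d r < 0 -> l * - lhs d r <= lhs z r - ratz (b r)) ->
  feasible (shift z d l).
Proof.
move=> l_ge0 l_vars l_rows; have [z_ge0 z_rows] := z_feas; split=> [v|r].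
  have [dv_lt0|dv_ge0] := ltrP (d v) 0; rewrite /shift.
    by rewrite -(opprK (l * d v)) -mulrN subr_ge0 l_vars.
  by rewrite addr_ge0 ?mulr_ge0.
have [zr|zr] := boolP (tight z r).
  by have := tight_shift l zr; case: (is_eq r) => // /eqP ->.
have := z_rows r; case: (is_eq r); first by rewrite (negbTE zr).
move=> br_le; rewrite lhs_shift; have [dr_lt0|dr_ge0] := ltrP (lhs d r) 0.
  by rewrite -subr_ge0 addrAC -(opprK (l * _)) subr_ge0 -mulrN l_rows.
by rewrite (le_trans br_le) // lerDl mulr_ge0.
Qed.

Lemma shift_descent v0 : d v0 < 0 -> exists2 z', feasible z' & (weight z' < weight z)%N.
Proof.
move=> dv0_lt0; have [z_ge0 z_rows] := z_feas.
pose P c := match c with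
  | inl v => d v < 0 | inr r => ~~ tight z r && (lhs d r < 0) end.
pose F c := match c with
  | inl v => z v / - d v | inr r => (lhs z r - ratz (b r)) / - lhs d r end.
have slack_ge0 r : ~~ tight z r -> 0 <= lhs z r - ratz (b r).
  by move: (z_rows r); case: (is_eq r) => [->|]; rewrite ?subr_ge0.
(* ratio test: l is the largest step keeping [shift z d l] feasible; at that step
   a coordinate of the support vanishes or a slack row becomes tight *)
have [c Pc F_min] := @arg_minP _ _ _ (inl v0 : V + 'I_m) P F dv0_lt0.
set l := F c; have l_ge0 : 0 <= l.
  case: c Pc {F_min} @l => [v /= dv|r /= /andP[zr dr]];
  by rewrite divr_ge0 ?z_ge0 ?slack_ge0 // oppr_ge0 ltW.
exists (shift z d l).
  apply: feasible_shift => // [v dv|r zr dr].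
    by rewrite -ler_pdivlMr ?oppr_gt0 // (F_min (inl v)).
  by rewrite -ler_pdivlMr ?oppr_gt0 // (F_min (inr r)) //= zr.
rewrite /weight /l {l l_ge0}; case: c Pc {F_min} => [v /= dv|r /= /andP[zr dr]].
  rewrite -addSn leq_add ?subset_leq_card ?slack_shift // proper_card //.
  apply/properP; split; first exact: support_shift.
  exists v; rewrite !inE ?negbK; first by apply: contraTneq dv => /d_supp ->.
  by rewrite /shift invrN mulrN mulNr divfK ?subrr // ltr0_neq0.
rewrite -addnS leq_add ?subset_leq_card ?support_shift // proper_card //.
apply/properP; split; first exact: slack_shift.
exists r; rewrite !inE ?negbK // /tight lhs_shift invrN mulrN mulNr divfK ?ltr0_neq0 //.
by rewrite opprB addrC subrK.
Qed.

End Descent.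

Lemma nonvertex_descent z : feasible z -> ~ vertex z ->
  exists2 z', feasible z' & (weight z' < weight z)%N.
Proof.
move=> z_feas z_nvertex.
have [d [d_supp d_tight [v]]] : exists d, [/\ forall v, z v = 0 -> d v = 0,
    forall r, tight z r -> lhs d r = 0 & exists v, d v != 0].
  apply: NNPP => no_d; apply: z_nvertex => d d_supp d_tight v.
  have [//|dv_neq0] := eqVneq (d v) 0.
  by exfalso; apply: no_d; exists d; split => //; exists v.
rewrite neq_lt => /orP[dv_lt0|dv_gt0].
  exact: (shift_descent z_feas d_supp d_tight dv_lt0).
apply: (@shift_descent z (fun v => - d v) z_feas _ _ v); rewrite ?oppr_lt0 //.
  by move=> w /d_supp ->; rewrite oppr0.
move=> r /d_tight dr0; rewrite -[RHS]oppr0 -dr0 /lhs -sumrN.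
by apply: eq_bigr => w _; rewrite mulrN.
Qed.

Lemma exists_vertex z : feasible z -> exists2 z', feasible z' & vertex z'.
Proof.
have [n] := ubnP (weight z); elim: n z => // n IHn z lt_zn z_feas.
have [z_vertex|] := classic (vertex z); first by exists z.
move=> /(nonvertex_descent z_feas)[z' z'_feas lt_z'z].
by apply: IHn z'_feas; apply: leq_trans lt_z'z _.
Qed.

Definition tight_mx z : 'M[int]_(m, #|support z|) :=
  \matrix_(r, i) (if tight z r then C r (enum_val i) else 0).
Definition tight_rhs z : 'cV[int]_m := \col_r (if tight z r then b r else 0).
Definition support_col z : 'cV[rat]_#|support z| := \col_i z (enum_val i).

Lemma sum_over_support z (F : V -> rat) : (forall v, z v = 0 -> F v = 0) ->
  \sum_v F v = \sum_(i < #|support z|) F (enum_val i).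
Proof.
move=> F_supp; rewrite (bigID (mem (support z))) /= [X in _ + X]big1 ?addr0.
  by rewrite big_enum_val.
by move=> v; rewrite inE negbK => /eqP /F_supp.
Qed.

Lemma tight_mx_solution z :
  map_mx ratz (tight_mx z) *m support_col z = map_mx ratz (tight_rhs z).
Proof.
apply/matrixP => r j; rewrite !mxE; under eq_bigr do rewrite !mxE.
case: ifP => [/eqP <-|_]; last by rewrite big1 // => i _; rewrite mul0r.
by rewrite /lhs (sum_over_support (z := z)) // => v ->; rewrite mulr0.
Qed.

Lemma vertex_tight_mx_full z : vertex z -> row_full (map_mx ratz (tight_mx z)).
Proof.
move=> z_vertex; suff: row_free (map_mx ratz (tight_mx z))^T by rewrite /row_free mxrank_tr.
rewrite -kermx_eq0.
apply/rowV0P => u /sub_kermxP u_ker; pose d v := \sum_i (enum_val i == v)%:R * u 0 i.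
have dE i : d (enum_val i) = u 0 i.
  rewrite /d (bigD1 i) //= eqxx mul1r big1 ?addr0 // => i' i'_neq.
  by rewrite (inj_eq enum_val_inj) (negbTE i'_neq) mul0r.
have d_supp v : z v = 0 -> d v = 0.
  move=> zv0; rewrite /d big1 // => i _; case: eqP => [v_eq|]; last by rewrite mul0r.
  by have := enum_valP i; rewrite v_eq inE zv0 eqxx.
apply/rowP => i; rewrite mxE -dE; apply: z_vertex => // r zr.
have := congr1 (fun w : 'rV_m => w 0 r) u_ker; rewrite !mxE => <-.
rewrite /lhs (sum_over_support (z := z)) => [|v /d_supp ->]; last by rewrite mulr0.
by apply: eq_bigr => j _; rewrite dE !mxE zr mulrC.
Qed.

Lemma vertex_support_le z : vertex z -> (#|support z| <= m)%N.
Proof. by move/vertex_tight_mx_full/eqP <-; apply: rank_leq_row. Qed.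

Lemma vertex_denominator (M : nat) z :
  (forall r v, `|C r v| <= M%:R) -> (forall r, `|b r| <= 1) -> vertex z ->
  exists2 D : int, 0 < D & forall v, exists w : int,
    ratz w = ratz D * z v /\ `|w| <= #|support z|`!%:R * M%:R ^+ #|support z|.-1.
Proof.
move=> leCM leb1 /vertex_tight_mx_full G_full.
pose f := fullrankfun G_full; pose B := rowsub f (tight_mx z).
have detB_neq0 : \det B != 0.
  have := fullrowsub_unit G_full; rewrite -map_mxsub -/B.
  by rewrite unitmxE unitfE det_map_mx intr_eq0.
have Bx : map_mx ratz B *m support_col z = map_mx ratz (rowsub f (tight_rhs z)).
  by rewrite !map_mxsub mul_rowsub_mx tight_mx_solution.
have leBM r i : `|B r i| <= M%:R by rewrite !mxE; case: ifP.
have lec1 r : `|rowsub f (tight_rhs z) r 0| <= 1 by rewrite !mxE; case: ifP.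
exists `|\det B|; first by rewrite normr_gt0.
move=> v; have [v_supp|] := boolP (v \in support z); last first.
  by rewrite inE negbK => /eqP ->; exists 0; rewrite mulr0 normr0 mulr_ge0 ?exprn_ge0.
have [w [wE w_le]] := cramer_int_bound detB_neq0 Bx leBM lec1 (enum_rank_in v_supp v).
by exists w; rewrite wE mxE enum_rankK_in.
Qed.

Lemma feasible_scale z (D : rat) : (forall r, 0 <= b r) -> (forall r, is_eq r -> b r = 0) ->
  1 <= D -> feasible z -> feasible (fun v => D * z v).
Proof.
move=> b_ge0 b_eq0 D_ge1 [z_ge0 z_rows]; have D_ge0 : 0 <= D := le_trans ler01 D_ge1.
have lhsZ r : lhs (fun v => D * z v) r = D * lhs z r.
  by rewrite /lhs mulr_sumr; apply: eq_bigr => v _; rewrite mulrCA.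
split=> [v|r]; first by rewrite mulr_ge0.
move: (z_rows r); rewrite /tight lhsZ; have [/b_eq0 -> /eqP ->|_ br_le] := boolP (is_eq r).
  by rewrite mulr0.
by rewrite (le_trans br_le) // ler_peMl // (le_trans _ br_le) // ler0z.
Qed.

Theorem feasible_nat_sparse (M : nat) z : (0 < M)%N ->
  (forall r v, `|C r v| <= M%:R) -> (forall r, 0 <= b r <= 1) ->
  (forall r, is_eq r -> b r = 0) -> feasible z ->
  exists w : V -> nat, [/\ feasible (fun v => (w v)%:R),
    (#|[set v | w v != 0%N]| <= m)%N & forall v, (w v <= m`! * M ^ m)%N].
Proof.
move=> M_gt0 leCM b01 b_eq0 /exists_vertex[z' z'_feas z'_vertex].
have leb1 r : `|b r| <= 1 by have /andP[b_ge0 b_le1] := b01 r; rewrite ger0_norm.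
have [D D_gt0 z'D] := vertex_denominator leCM leb1 z'_vertex.
have s_le_m := vertex_support_le z'_vertex; set s := #|support z'| in z'D s_le_m.
pose w v := `|numq (ratz D * z' v)|%N.
have w_spec v : (w v)%:R = ratz D * z' v /\ (w v <= s`! * M ^ s.-1)%N.
  have [n [nE n_le]] := z'D v.
  have n_ge0 : 0 <= n by rewrite -(ler0z rat) nE mulr_ge0 ?(z'_feas.1) // ler0z ltW.
  rewrite /w -nE numq_int natr_absz ger0_norm //; split=> //.
  by rewrite -lez_nat abszE -natz natrM natrX.
exists w; split.
- apply: (@eq_feasible (fun v => ratz D * z' v)) => [v|]; first by rewrite (w_spec v).1.
  by apply: feasible_scale => // [r|]; [case/andP: (b01 r) | rewrite ler1z].
- apply: leq_trans s_le_m; apply: subset_leq_card; apply/subsetP => v; rewrite !inE.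
  by apply: contraNN => /eqP z'v0; rewrite -(eqr_nat rat) (w_spec v).1 z'v0 mulr0.
- move=> v; apply: leq_trans (w_spec v).2 _; rewrite leq_mul ?leq_fact //.
  by rewrite leq_pexp2l // (leq_trans (leq_pred s)).
Qed.

End Polyhedron.

Lemma sum_pair_fst (R : nmodType) (I T : finType) (j : I) (P : pred T) (G : I * T -> R) :
  \sum_(p | (p.1 == j) && P p.2) G p = \sum_(t | P t) G (j, t).
Proof.
transitivity (\sum_(i | i == j) \sum_(t | P t) G (i, t)); last by rewrite big_pred1_eq.
by rewrite pair_big_dep; apply: eq_bigr => -[].
Qed.

Lemma sum_if (T : finType) (P : pred T) (g : T -> int) (F : T -> rat) :
  \sum_t ratz (if P t then g t else 0) * F t = \sum_(t | P t) ratz (g t) * F t.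
Proof. by rewrite [RHS]big_mkcond; apply: eq_bigr => t _; case: (P t); rewrite ?mul0r. Qed.

Lemma sum_delta (T : finType) (t0 : T) (F : T -> rat) :
  \sum_t ratz (if t == t0 then 1 else 0) * F t = F t0.
Proof. by rewrite sum_if big_pred1_eq mul1r. Qed.

Section Encoding.
Variables (A : finType) (len k : nat) (Theta : 'I_k -> {set ctype A len}).
Variables (i : 'I_k) (theta : ctype A len).

Definition unknown := (('I_k * ctype A len) + ('I_k * A))%type.

(* Each row c of Gamma reads  sum_v coef c v * z v  (= or >=)  rhs c,  where E0 is
   rearranged as  Y - sum_t t(a) X = 0  and E2 as  Y_j - Y_l >= 0. *)
Definition coef (c : constr A k) (v : unknown) : int :=
  match c, v with
  | CE0 j a, inl x => if (x.1 == j) && (x.2 \in Theta j) then - (x.2 a)%:Z else 0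
  | CE0 j a, inr y => if y == (j, a) then 1 else 0
  | CE1a j a, _ => if v == inr (j, a) then 1 else 0
  | CE1b j a, inl x =>
      if (x.1 == j) && [&& x.2 \in Theta j & nat_of_ord (x.2 a) == Mphi A len] then 1 else 0
  | CE1b _ _, inr _ => 0
  | CE2 j l a, _ => (if v == inr (j, a) then 1 else 0) - (if v == inr (l, a) then 1 else 0)
  | CE3, _ => if v == inl (i, theta) then 1 else 0
  end.

Definition rhs (c : constr A k) : int :=
  match c with CE1a _ _ | CE1b _ _ | CE3 => 1 | _ => 0 end.

Definition is_equation (c : constr A k) := if c is CE0 _ _ then true else false.

Lemma holds_iff (X : 'I_k -> ctype A len -> rat) (Y : 'I_k -> A -> rat) (z : unknown -> rat) :
  (forall j t, z (inl (j, t)) = X j t) -> (forall j a, z (inr (j, a)) = Y j a) ->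
  forall c, holds Theta i theta X Y c <->
  let s := \sum_v ratz (coef c v) * z v in
  if is_equation c then s == ratz (rhs c) else ratz (rhs c) <= s.
Proof.
move=> zX zY c; have X_block j (P : pred (ctype A len)) (g : ctype A len -> int) :
    \sum_p ratz (if (p.1 == j) && P p.2 then g p.2 else 0) * z (inl p) =
    \sum_(t | P t) ratz (g t) * X j t.
  by rewrite sum_if sum_pair_fst; apply: eq_bigr => t _; rewrite zX.
case: c => [j a|j a|j a|j l a|] /=.
- rewrite big_sumType /= (X_block j (fun t => t \in Theta j) (fun t => - (t a)%:Z)).
  have -> : \sum_(t in Theta j) ratz (- (t a)%:Z) * X j t =
    - \sum_(t in Theta j) (nat_of_ord (t a))%:R * X j t.
    by rewrite -sumrN; apply: eq_bigr => t _; rewrite intrN mulNr.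
  by rewrite sum_delta zY addrC subr_eq0; split=> [->|/eqP].
- by rewrite sum_delta zY.
- rewrite big_sumType /= [S in _ + S]big1 => [|p _]; last by rewrite mul0r.
  rewrite addr0.
  rewrite (X_block j (fun t => (t \in Theta j) && (nat_of_ord (t a) == Mphi A len)) (fun=> 1)).
  by under [S in _ <-> _ <= S]eq_bigr do rewrite mulr1z mul1r.
- under eq_bigr do rewrite intrB mulrBl.
  by rewrite sumrB !sum_delta !zY subr_ge0.
- by rewrite sum_delta zX.
Qed.

Definition gamma_row (r : 'I_(size (Gamma Theta))) := List.nth r (Gamma Theta) (CE3 A k).
Definition gamma_coef r v := coef (gamma_row r) v.
Definition gamma_rhs r := rhs (gamma_row r).
Definition gamma_is_eq r := is_equation (gamma_row r).

Lemma solves_iff_feasible X Y (z : unknown -> rat) :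
  (forall j t, z (inl (j, t)) = X j t) -> (forall j a, z (inr (j, a)) = Y j a) ->
  (forall v, 0 <= z v) ->
  solves Theta i theta X Y <-> feasible gamma_coef gamma_rhs gamma_is_eq z.
Proof.
move=> zX zY z_ge0; split=> [z_solves|[_ z_rows] c c_in].
  split=> // r; apply/(holds_iff zX zY); apply: z_solves; apply: List.nth_In.
  exact/ssrnat.ltP.
have [r [/ssrnat.ltP r_lt <-]] := List.In_nth _ _ (CE3 A k) c_in.
exact/(holds_iff zX zY)/(z_rows (Ordinal r_lt)).
Qed.

Lemma gamma_coef_bound r v : (0 < Mphi A len)%N -> `|gamma_coef r v| <= (Mphi A len)%:R.
Proof.
move=> M_gt0; have le01M (c : bool) : `|(if c then 1 else 0 : int)| <= (Mphi A len)%:R.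
  by case: c; rewrite ?normr1 ?normr0 // ler1n.
rewrite /gamma_coef; case: (gamma_row r) => [j a|j a|j a|j l a|]; case: v => -[j' x] //=.
- by case: ifP => _; rewrite ?normr0 // normrN natz -abszE lez_nat -ltnS ltn_ord.
- by do 2 case: eqP => _; rewrite ?subrr ?subr0 ?sub0r ?normrN ?normr1 ?normr0 // ler1n.
Qed.

Lemma gamma_rhs01 r : 0 <= gamma_rhs r <= 1.
Proof. by rewrite /gamma_rhs; case: (gamma_row r). Qed.

Lemma gamma_eq_homogeneous r : gamma_is_eq r -> gamma_rhs r = 0.
Proof. by rewrite /gamma_rhs /gamma_is_eq; case: (gamma_row r). Qed.

Lemma nonzero_unknowns_le (w : unknown -> nat) :
  (nonzero_unknowns Theta (fun j t => w (inl (j, t))) (fun j a => w (inr (j, a)))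
   <= #|[set v | w v != 0%N]|)%N.
Proof.
have -> : #|[set v | w v != 0%N]| =
    (#|[set p | w (inl p) != 0%N]| + #|[set p | w (inr p) != 0%N]|)%N.
  by rewrite -!sum1_card big_sumType /=; congr (_ + _)%N; apply: eq_bigl => p; rewrite !inE.
by rewrite leq_add //; apply: subset_leq_card; apply/subsetP => -[j x]; rewrite !inE => /andP[].
Qed.

Lemma gamma_nat_sparse (X : 'I_k -> ctype A len -> rat) (Y : 'I_k -> A -> rat) :
  (0 < Mphi A len)%N ->
  (forall j t, 0 <= X j t) -> (forall j a, 0 <= Y j a) -> solves Theta i theta X Y ->
  let m := size (Gamma Theta) in let bound := (m`! * Mphi A len ^ m)%N in
  exists (X' : 'I_k -> ctype A len -> nat) (Y' : 'I_k -> A -> nat),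
  [/\ solves (R := rat) Theta i theta (fun j t => (X' j t)%:R) (fun j a => (Y' j a)%:R),
      (nonzero_unknowns Theta X' Y' <= m)%N,
      forall j t, (X' j t <= bound)%N & forall j a, (Y' j a <= bound)%N].
Proof.
move=> M_gt0 X_ge0 Y_ge0 XY_solves m bound.
pose z v := match v with inl p => X p.1 p.2 | inr p => Y p.1 p.2 end.
have z_feas : feasible gamma_coef gamma_rhs gamma_is_eq z.
  by apply/(solves_iff_feasible (z := z)) => // -[] [].
have [w [w_feas w_supp w_le]] := feasible_nat_sparse M_gt0
  (fun r v => gamma_coef_bound r v M_gt0) gamma_rhs01 gamma_eq_homogeneous z_feas.
exists (fun j t => w (inl (j, t))), (fun j a => w (inr (j, a))); split=> //.
- by apply/(solves_iff_feasible (z := fun v => (w v)%:R)) => // v; apply: ler0n.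
- exact: leq_trans (nonzero_unknowns_le w) w_supp.
Qed.

End Encoding.

Lemma fact_le_expn n : (n`! <= n ^ n)%N.
Proof.
elim: n => // n IHn; rewrite factS expnS leq_mul2l /= (leq_trans IHn) //.
by case: n {IHn} => // n; rewrite leq_exp2r.
Qed.

Lemma fact_expn_le_bound m M : (0 < m)%N -> (m`! * M ^ m <= m * (m * M) ^ (2 * m + 1))%N.
Proof.
move=> m_gt0; have [->|M_gt0] := posnP M; first by rewrite exp0n // muln0.
rewrite (leq_trans (leq_mul (fact_le_expn m) (leqnn _))) // -expnMn.
rewrite (leq_trans _ (leq_pmull _ m_gt0)) // leq_pexp2l ?muln_gt0 ?m_gt0 //.
by rewrite mul2n -addnn -addnA leq_addr.
Qed.

Theorem lemma4 (A : finType) (len k : nat)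
  (hA : (0 < #|A|)%N) (hlen : (0 < len)%N)
  (Theta : 'I_k -> {set ctype A len}) (i : 'I_k) (theta : ctype A len)
  (htheta : theta \in Theta i) :
  let m := size (Gamma Theta) in
  let bound := (m * (m * Mphi A len) ^ (2 * m + 1))%N in
  ((exists (X : 'I_k -> ctype A len -> nat) (Y : 'I_k -> A -> nat),
      solves (R := rat) Theta i theta (fun j t => (X j t)%:R) (fun j a => (Y j a)%:R))
   <->
   (exists (X : 'I_k -> ctype A len -> rat) (Y : 'I_k -> A -> rat),
      (forall j t, 0 <= X j t)%R /\ (forall j a, 0 <= Y j a)%R /\
      solves Theta i theta X Y))
  /\
  ((exists (X : 'I_k -> ctype A len -> rat) (Y : 'I_k -> A -> rat),
      (forall j t, 0 <= X j t)%R /\ (forall j a, 0 <= Y j a)%R /\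
      solves Theta i theta X Y)
   <->
   (exists (X : 'I_k -> ctype A len -> nat) (Y : 'I_k -> A -> nat),
      solves (R := rat) Theta i theta (fun j t => (X j t)%:R) (fun j a => (Y j a)%:R) /\
      (nonzero_unknowns Theta X Y <= m)%N /\
      (forall j t, t \in Theta j -> (X j t <= bound)%N) /\
      (forall j a, a \in ATheta Theta -> (Y j a <= bound)%N))).
Proof.
move=> m bound.
have M_gt0 : (0 < Mphi A len)%N by rewrite /Mphi !muln_gt0 hA hlen.
have m_gt0 : (0 < m)%N by rewrite /m /Gamma size_cat addn1.
pose rat_solution := exists (X : 'I_k -> ctype A len -> rat) (Y : 'I_k -> A -> rat),
  (forall j t, 0 <= X j t) /\ (forall j a, 0 <= Y j a) /\ solves Theta i theta X Y.
have nat_rat (X : 'I_k -> ctype A len -> nat) (Y : 'I_k -> A -> nat) :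
    solves (R := rat) Theta i theta (fun j t => (X j t)%:R) (fun j a => (Y j a)%:R) ->
    rat_solution.
  by exists (fun j t => (X j t)%:R), (fun j a => (Y j a)%:R); do !split=> * //.
have rat_sparse : rat_solution -> exists X Y,
    [/\ solves (R := rat) Theta i theta (fun j t => (X j t)%:R) (fun j a => (Y j a)%:R),
      (nonzero_unknowns Theta X Y <= m)%N,
      forall j t, (X j t <= bound)%N & forall j a, (Y j a <= bound)%N].
  move=> [X [Y [X_ge0 [Y_ge0 XY_solves]]]].
  have [X' [Y' [X'Y'_solves supp X'_le Y'_le]]] :=
    gamma_nat_sparse M_gt0 X_ge0 Y_ge0 XY_solves.
  have le_bound := fact_expn_le_bound (Mphi A len) m_gt0.
  by exists X', Y'; split=> // [j t|j a]; apply: leq_trans le_bound.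
split; split.
- by move=> [X [Y /nat_rat]].
- by move=> /rat_sparse[X [Y []]]; exists X, Y.
- by move=> /rat_sparse[X [Y []]]; exists X, Y.
- by move=> [X [Y [/nat_rat]]].
Qed.
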